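(* Let $\pi$ be a $k$-simple $\mathbf{LKI}_{\mathcal E}$-proof of a sequent $S$. Then there exists a proof schema with end-sequent $S$.
   Context: **Language.** A two-sorted first-order language with sort $\omega$ (natural numbers) and sort $\iota$. It contains the constant function symbols $0:\omega$ and $s:\omega\to\omega$ (we write $t+1$ for $s(t)$), further uninterpreted (''constant'') function and predicate symbols, and defined function and predicate symbols. Each defined function symbol $f:\omega\times\tau_1\times\cdots\times\tau_n\to\tau$ comes with two rewrite rules $f(0,\bar x)\to s$ and $f(s(y),\bar x)\to t[f(y,\bar x)]$, where: - $s$ and $t$ do not contain $f$; - $\mathrm{vars}(s)\subseteq\{\bar x\}$ and $\mathrm{vars}(t)\subseteq\{\bar x,y\}$; - every defined symbol $g$ occurring in $s$ or $t$ satisfies $g\prec f$ for a fixed irreflexive order $\prec$ (primitive recursion). Defined predicate symbols are analogous, with formulas as right-hand sides. $\mathcal E$ denotes these rewrite rules read as equations. **Calculi.** $\mathbf{LK}_{\mathcal E}$ is Gentzen's $\mathbf{LK}$ (sequents are pairs of multisets; axioms $A\vdash A$ with $A$ atomic) extended by the rule: from $S[t]$ infer $S[t']$ whenever $\mathcal E\models t=t'$. For a proof symbol $\varphi$, terms $a_1,\dots,a_m$ and a sequent $S(x_1,\dots,x_m)$, a proof link is $(\varphi(a_1,\dots,a_m))$ written above $S(a_1,\dots,a_m)$. It is a $k$-proof link (for a variable $k:\omega$) if $\mathrm{vars}(a_1)\subseteq\{k\}$. $\mathbf{LKS}_{\mathcal E}$ is $\mathbf{LK}_{\mathcal E}$ in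 which proof links may occur as leaves. **Proof schemata.** A proof schema pair for a proof symbol $\psi$ with sequent $S(n,x_1,\dots,x_m)$ (where $n:\omega$) is a pair $(\pi,\nu(k))$ of $\mathbf{LKS}_{\mathcal E}$-proofs of $S(0,\bar x)$ and $S(k+1,\bar x)$ respectively, such that: - $\pi$ contains no proof links; - $\nu(k)$ contains only proof links of the form $(\psi(k,a_1,\dots,a_m))$ above $S(k,a_1,\dots,a_m)$. A proof schema $\Psi=\langle(\pi_1,\nu_1(k)),\dots,(\pi_\alpha,\nu_\alpha(k))\rangle$ is a tuple of proof schema pairs for proof symbols $\psi_1,\dots,\psi_\alpha$, such that the proofs of the $\beta$-th pair may additionally contain $k$-proof links to $\psi_\gamma$ for $\beta<\gamma$. Its end-sequent is the sequent $S(n,\bar x)$ of $\psi_1$. **Induction.** $\mathbf{LKI}_{\mathcal E}$ is $\mathbf{LK}_{\mathcal E}$ (without proof links) extended by the induction rule: from $A(k),\Gamma\vdash\Delta,A(k+1)$ infer $A(0),\Gamma\vdash\Delta,A(t)$, where $k:\omega$ is a variable not occurring in $\Gamma,\Delta,A(0)$ and $t$ is a term of sort $\omega$. An $\mathbf{LKI}_{\mathcal E}$-proof is $k$-simple if in all its induction inferences the eigenvariable is $k$ and $\mathrm{vars}(t)\subseteq\{k\}$. *)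

From Stdlib Require Import List Permutation Arith Bool.
Import ListNotations.

Set Implicit Arguments.

(** [SO] is the sort omega (natural numbers), [SI] is the sort iota. *)
Inductive sort := SO | SI.

Definition sort_eqb (s1 s2 : sort) : bool :=
  match s1, s2 with SO, SO | SI, SI => true | _, _ => false end.

Definition var := (sort * nat)%type.

Definition var_eqb (v w : var) : bool :=
  sort_eqb (fst v) (fst w) && Nat.eqb (snd v) (snd w).

(** The symbols [0 : omega] and [s : omega -> omega] are built into the
    term syntax. *)
Record signature := {
  fsym : Type;
  fargs : fsym -> list sort;
  fres : fsym -> sort;
  psym : Type;
  pargs : psym -> list sort
}.
Arguments fargs {_} _.
Arguments fres {_} _.
Arguments pargs {_} _.

Section Syntax.
Context {Sg : signature}.

(** Terms, in locally nameless style: free variables are named,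
    bound variables are de Bruijn indices. *)
Inductive term :=
| TFree (v : var)
| TBound (i : nat)
| TZero
| TSucc (t : term)
| TApp (f : fsym Sg) (l : list term).

Inductive formula :=
| FAtom (p : psym Sg) (l : list term)
| FNeg (A : formula)
| FAnd (A B : formula)
| FOr (A B : formula)
| FImp (A B : formula)
| FAll (s : sort) (A : formula)   (* body: bound index 0 has sort s *)
| FEx (s : sort) (A : formula).

Definition is_atom (A : formula) : Prop := exists p l, A = FAtom p l.

(** Well-sortedness; [G] gives the sorts of the bound indices. *)
Fixpoint wf_term (G : list sort) (t : term) (s : sort) {struct t} : Prop :=
  match t with
  | TFree v => fst v = s
  | TBound i => nth_error G i = Some s
  | TZero => s = SO
  | TSucc u => s = SO /\ wf_term G u SO
  | TApp f l =>
      s = fres f /\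
      (fix go (l : list term) (ss : list sort) : Prop :=
         match l, ss with
         | [], [] => True
         | u :: l', s' :: ss' => wf_term G u s' /\ go l' ss'
         | _, _ => False
         end) l (fargs f)
  end.

Fixpoint wf_terms (G : list sort) (l : list term) (ss : list sort) : Prop :=
  match l, ss with
  | [], [] => True
  | u :: l', s' :: ss' => wf_term G u s' /\ wf_terms G l' ss'
  | _, _ => False
  end.

Fixpoint wf_form (G : list sort) (A : formula) : Prop :=
  match A with
  | FAtom p l => wf_terms G l (pargs p)
  | FNeg B => wf_form G B
  | FAnd B C | FOr B C | FImp B C => wf_form G B /\ wf_form G C
  | FAll s B | FEx s B => wf_form (s :: G) B
  end.

Fixpoint fv_term (t : term) : list var :=
  match t with
  | TFree v => [v]
  | TBound _ | TZero => []
  | TSucc u => fv_term u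
  | TApp _ l => flat_map fv_term l
  end.

Fixpoint fv_form (A : formula) : list var :=
  match A with
  | FAtom _ l => flat_map fv_term l
  | FNeg B => fv_form B
  | FAnd B C | FOr B C | FImp B C => fv_form B ++ fv_form C
  | FAll _ B | FEx _ B => fv_form B
  end.

(** Substitution of terms for free variables (the substituted terms are
    always locally closed where it is used, so no capture can occur). *)
Fixpoint subst_term (sg : var -> term) (t : term) : term :=
  match t with
  | TFree v => sg v
  | TBound i => TBound i
  | TZero => TZero
  | TSucc u => TSucc (subst_term sg u)
  | TApp f l => TApp f (map (subst_term sg) l)
  end.

Fixpoint subst_form (sg : var -> term) (A : formula) : formula :=
  match A with
  | FAtom p l => FAtom p (map (subst_term sg) l)
  | FNeg B => FNeg (subst_form sg B)
  | FAnd B C => FAnd (subst_form sg B) (subst_form sg C)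
  | FOr B C => FOr (subst_form sg B) (subst_form sg C)
  | FImp B C => FImp (subst_form sg B) (subst_form sg C)
  | FAll s B => FAll s (subst_form sg B)
  | FEx s B => FEx s (subst_form sg B)
  end.

Definition sub1 (x : var) (u : term) : var -> term :=
  fun v => if var_eqb v x then u else TFree v.

Fixpoint open_term (d : nat) (u : term) (t : term) : term :=
  match t with
  | TFree v => TFree v
  | TBound i => if Nat.eqb i d then u else TBound i
  | TZero => TZero
  | TSucc w => TSucc (open_term d u w)
  | TApp f l => TApp f (map (open_term d u) l)
  end.

Fixpoint open_form (d : nat) (u : term) (A : formula) : formula :=
  match A with
  | FAtom p l => FAtom p (map (open_term d u) l)
  | FNeg B => FNeg (open_form d u B)
  | FAnd B C => FAnd (open_form d u B) (open_form d u C)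
  | FOr B C => FOr (open_form d u B) (open_form d u C)
  | FImp B C => FImp (open_form d u B) (open_form d u C)
  | FAll s B => FAll s (open_form (S d) u B)
  | FEx s B => FEx s (open_form (S d) u B)
  end.

Definition inst (A : formula) (u : term) : formula := open_form 0 u A.

Definition dsym := (fsym Sg + psym Sg)%type.

(** Rule data of a defined function symbol [f]:
       f(0, xs)      -> fr_base
       f(s(y), xs)   -> fr_step
    where [fr_step] is the term t[f(y,xs)], i.e. it may contain [f] only in
    the subterms f(y, xs) (the holes of the context t). *)
Record frule := { fr_xs : list var; fr_y : var; fr_base : term; fr_step : term }.

Record prule := { pr_xs : list var; pr_y : var;
                  pr_base : formula; pr_step : formula }.

Fixpoint term_ok (good : fsym Sg -> Prop) (hole : term -> Prop) (t : term)
  : Prop :=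
  hole t \/
  match t with
  | TFree _ | TBound _ | TZero => True
  | TSucc u => term_ok good hole u
  | TApp g l =>
      good g /\
      (fix go (l : list term) : Prop :=
         match l with [] => True | u :: l' => term_ok good hole u /\ go l' end) l
  end.

Fixpoint form_ok (goodf : fsym Sg -> Prop) (goodp : psym Sg -> Prop)
  (hole : formula -> Prop) (A : formula) : Prop :=
  hole A \/
  match A with
  | FAtom q l => goodp q /\ Forall (term_ok goodf (fun _ => False)) l
  | FNeg B => form_ok goodf goodp hole B
  | FAnd B C | FOr B C | FImp B C =>
      form_ok goodf goodp hole B /\ form_ok goodf goodp hole C
  | FAll _ B | FEx _ B => form_ok goodf goodp hole B
  end.

Record pr_system := {
  fdef : fsym Sg -> Prop;
  pdef : psym Sg -> Prop;
  prec : dsym -> dsym -> Prop;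
  frules : fsym Sg -> frule;
  prules : psym Sg -> prule
}.

Definition f_lhs0 (f : fsym Sg) (r : frule) : term :=
  TApp f (TZero :: map TFree (fr_xs r)).
Definition f_lhsS (f : fsym Sg) (r : frule) : term :=
  TApp f (TSucc (TFree (fr_y r)) :: map TFree (fr_xs r)).
Definition p_lhs0 (p : psym Sg) (r : prule) : formula :=
  FAtom p (TZero :: map TFree (pr_xs r)).
Definition p_lhsS (p : psym Sg) (r : prule) : formula :=
  FAtom p (TSucc (TFree (pr_y r)) :: map TFree (pr_xs r)).

Definition frule_ok (E : pr_system) (f : fsym Sg) : Prop :=
  let r := frules E f in
  let good := fun g => fdef E g -> prec E (inl g) (inl f) in
  fargs f = SO :: map fst (fr_xs r) /\ fst (fr_y r) = SO /\
  NoDup (fr_y r :: fr_xs r) /\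
  wf_term [] (fr_base r) (fres f) /\ wf_term [] (fr_step r) (fres f) /\
  (forall v, In v (fv_term (fr_base r)) -> In v (fr_xs r)) /\
  (forall v, In v (fv_term (fr_step r)) -> In v (fr_y r :: fr_xs r)) /\
  term_ok good (fun _ => False) (fr_base r) /\
  term_ok good (fun u => u = TApp f (TFree (fr_y r) :: map TFree (fr_xs r)))
          (fr_step r).

Definition prule_ok (E : pr_system) (p : psym Sg) : Prop :=
  let r := prules E p in
  let goodf := fun g => fdef E g -> prec E (inl g) (inr p) in
  let goodp := fun q => pdef E q -> prec E (inr q) (inr p) in
  pargs p = SO :: map fst (pr_xs r) /\ fst (pr_y r) = SO /\
  NoDup (pr_y r :: pr_xs r) /\
  wf_form [] (pr_base r) /\ wf_form [] (pr_step r) /\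
  (forall v, In v (fv_form (pr_base r)) -> In v (pr_xs r)) /\
  (forall v, In v (fv_form (pr_step r)) -> In v (pr_y r :: pr_xs r)) /\
  form_ok goodf goodp (fun _ => False) (pr_base r) /\
  form_ok goodf goodp
    (fun B => B = FAtom p (TFree (pr_y r) :: map TFree (pr_xs r)))
    (pr_step r).

Definition pr_system_ok (E : pr_system) : Prop :=
  (forall a, ~ prec E a a) /\
  (forall a b c, prec E a b -> prec E b c -> prec E a c) /\
  (forall f, fdef E f -> frule_ok E f) /\
  (forall p, pdef E p -> prule_ok E p).

Record structure := {
  U : Type;
  dom : sort -> U -> Prop;
  dom_ne : forall s, exists u, dom s u;
  i0 : U;
  isucc : U -> U;
  ifun : fsym Sg -> list U -> U;
  ipred : psym Sg -> list U -> Prop;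
  i0_dom : dom SO i0;
  isucc_dom : forall u, dom SO u -> dom SO (isucc u);
  ifun_dom : forall f us, Forall2 dom (fargs f) us -> dom (fres f) (ifun f us)
}.

Fixpoint eval (M : structure) (rho : var -> U M) (be : list (U M)) (t : term)
  : U M :=
  match t with
  | TFree v => rho v
  | TBound i => nth i be (i0 M)
  | TZero => i0 M
  | TSucc u => isucc M (eval M rho be u)
  | TApp f l => ifun M f (map (eval M rho be) l)
  end.

Fixpoint holds (M : structure) (rho : var -> U M) (be : list (U M))
  (A : formula) : Prop :=
  match A with
  | FAtom p l => ipred M p (map (eval M rho be) l)
  | FNeg B => ~ holds M rho be B
  | FAnd B C => holds M rho be B /\ holds M rho be C
  | FOr B C => holds M rho be B \/ holds M rho be C
  | FImp B C => holds M rho be B -> holds M rho be C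
  | FAll s B => forall u, dom M s u -> holds M rho (u :: be) B
  | FEx s B => exists u, dom M s u /\ holds M rho (u :: be) B
  end.

Definition sorted_asg (M : structure) (rho : var -> U M) : Prop :=
  forall v, dom M (fst v) (rho v).

Definition is_model (E : pr_system) (M : structure) : Prop :=
  (forall f, fdef E f -> forall rho, sorted_asg M rho ->
     eval M rho [] (f_lhs0 f (frules E f)) = eval M rho [] (fr_base (frules E f)) /\
     eval M rho [] (f_lhsS f (frules E f)) = eval M rho [] (fr_step (frules E f))) /\
  (forall p, pdef E p -> forall rho, sorted_asg M rho ->
     (holds M rho [] (p_lhs0 p (prules E p)) <-> holds M rho [] (pr_base (prules E p))) /\
     (holds M rho [] (p_lhsS p (prules E p)) <-> holds M rho [] (pr_step (prules E p)))).

(** E |= t = t' for terms of sort [s], in a context [G] of bound variables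
    (which are treated like free, universally quantified variables). *)
Definition E_eq_term (E : pr_system) (G : list sort) (t t' : term) (s : sort)
  : Prop :=
  wf_term G t s /\ wf_term G t' s /\
  forall M, is_model E M -> forall rho, sorted_asg M rho ->
  forall be, Forall2 (dom M) G be -> eval M rho be t = eval M rho be t'.

Definition E_eq_form (E : pr_system) (G : list sort) (A A' : formula) : Prop :=
  wf_form G A /\ wf_form G A' /\
  forall M, is_model E M -> forall rho, sorted_asg M rho ->
  forall be, Forall2 (dom M) G be -> (holds M rho be A <-> holds M rho be A').

Fixpoint repl_term (E : pr_system) (G : list sort) (u u' : term) {struct u}
  : Prop :=
  u = u' \/ (exists s, E_eq_term E G u u' s) \/
  match u, u' with
  | TSucc a, TSucc b => repl_term E G a b
  | TApp f l, TApp g l' =>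
      f = g /\
      (fix go (l l' : list term) : Prop :=
         match l, l' with
         | [], [] => True
         | a :: l1, b :: l1' => repl_term E G a b /\ go l1 l1'
         | _, _ => False
         end) l l'
  | _, _ => False
  end.

Fixpoint repl_terms (E : pr_system) (G : list sort) (l l' : list term) : Prop :=
  match l, l' with
  | [], [] => True
  | a :: l1, b :: l1' => repl_term E G a b /\ repl_terms E G l1 l1'
  | _, _ => False
  end.

Fixpoint repl_form (E : pr_system) (G : list sort) (A A' : formula) : Prop :=
  A = A' \/ E_eq_form E G A A' \/
  match A, A' with
  | FAtom p l, FAtom q l' => p = q /\ repl_terms E G l l'
  | FNeg B, FNeg B' => repl_form E G B B'
  | FAnd B C, FAnd B' C' | FOr B C, FOr B' C' | FImp B C, FImp B' C' =>
      repl_form E G B B' /\ repl_form E G C C'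
  | FAll s B, FAll s' B' | FEx s B, FEx s' B' =>
      s = s' /\ repl_form E (s :: G) B B'
  | _, _ => False
  end.

(** Sequents are pairs of lists, considered up to permutation
    (rule [d_perm]), i.e. pairs of multisets. *)
Definition sequent := (list formula * list formula)%type.

Definition fv_seq (S : sequent) : list var :=
  flat_map fv_form (fst S ++ snd S).

Definition repl_seq (E : pr_system) (S S' : sequent) : Prop :=
  Forall2 (repl_form E []) (fst S) (fst S') /\
  Forall2 (repl_form E []) (snd S) (snd S').

(** Generic derivations: LK_E, plus leaves [L] (proof links) and
    induction inferences whose eigenvariable [k] and term [t] satisfy
    [Ind k t].
    - LKS_E  = [deriv E L NoInd]   (proof links allowed by [L])
    - LKI_E  = [deriv E NoLinks Ind] *)
Inductive deriv (E : pr_system) (L : sequent -> Prop)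
  (Ind : var -> term -> Prop) : sequent -> Prop :=
| d_ax A : is_atom A -> deriv E L Ind ([A], [A])
| d_link S : L S -> deriv E L Ind S
| d_perm G D G' D' :
    deriv E L Ind (G, D) -> Permutation G G' -> Permutation D D' ->
    deriv E L Ind (G', D')
| d_wl A G D : deriv E L Ind (G, D) -> deriv E L Ind (A :: G, D)
| d_wr A G D : deriv E L Ind (G, D) -> deriv E L Ind (G, A :: D)
| d_cl A G D : deriv E L Ind (A :: A :: G, D) -> deriv E L Ind (A :: G, D)
| d_cr A G D : deriv E L Ind (G, A :: A :: D) -> deriv E L Ind (G, A :: D)
| d_cut A G1 D1 G2 D2 :
    deriv E L Ind (G1, A :: D1) -> deriv E L Ind (A :: G2, D2) ->
    deriv E L Ind (G1 ++ G2, D1 ++ D2)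
| d_negl A G D : deriv E L Ind (G, A :: D) -> deriv E L Ind (FNeg A :: G, D)
| d_negr A G D : deriv E L Ind (A :: G, D) -> deriv E L Ind (G, FNeg A :: D)
| d_andl1 A B G D :
    deriv E L Ind (A :: G, D) -> deriv E L Ind (FAnd A B :: G, D)
| d_andl2 A B G D :
    deriv E L Ind (B :: G, D) -> deriv E L Ind (FAnd A B :: G, D)
| d_andr A B G D :
    deriv E L Ind (G, A :: D) -> deriv E L Ind (G, B :: D) ->
    deriv E L Ind (G, FAnd A B :: D)
| d_orl A B G D :
    deriv E L Ind (A :: G, D) -> deriv E L Ind (B :: G, D) ->
    deriv E L Ind (FOr A B :: G, D)
| d_orr1 A B G D :
    deriv E L Ind (G, A :: D) -> deriv E L Ind (G, FOr A B :: D)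
| d_orr2 A B G D :
    deriv E L Ind (G, B :: D) -> deriv E L Ind (G, FOr A B :: D)
| d_impl A B G1 D1 G2 D2 :
    deriv E L Ind (G1, A :: D1) -> deriv E L Ind (B :: G2, D2) ->
    deriv E L Ind (FImp A B :: G1 ++ G2, D1 ++ D2)
| d_impr A B G D :
    deriv E L Ind (A :: G, B :: D) -> deriv E L Ind (G, FImp A B :: D)
| d_alll s A t G D :
    wf_term [] t s ->
    deriv E L Ind (inst A t :: G, D) -> deriv E L Ind (FAll s A :: G, D)
| d_allr s A a G D :
    fst a = s -> ~ In a (fv_seq (G, FAll s A :: D)) ->
    deriv E L Ind (G, inst A (TFree a) :: D) ->
    deriv E L Ind (G, FAll s A :: D)
| d_exl s A a G D :
    fst a = s -> ~ In a (fv_seq (FEx s A :: G, D)) ->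
    deriv E L Ind (inst A (TFree a) :: G, D) ->
    deriv E L Ind (FEx s A :: G, D)
| d_exr s A t G D :
    wf_term [] t s ->
    deriv E L Ind (G, inst A t :: D) -> deriv E L Ind (G, FEx s A :: D)
| d_eq S S' : deriv E L Ind S -> repl_seq E S S' -> deriv E L Ind S'
| d_ind A k t G D :
    Ind k t -> fst k = SO -> wf_term [] t SO ->
    ~ In k (fv_seq (subst_form (sub1 k TZero) A :: G, D)) ->
    deriv E L Ind (A :: G, subst_form (sub1 k (TSucc (TFree k))) A :: D) ->
    deriv E L Ind (subst_form (sub1 k TZero) A :: G,
                   subst_form (sub1 k t) A :: D).

Definition NoLinks : sequent -> Prop := fun _ => False.
Definition NoInd : var -> term -> Prop := fun _ _ => False.

Definition LKS_proof (E : pr_system) (L : sequent -> Prop) (S : sequent) : Prop :=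
  deriv E L NoInd S.

Definition k_simple_LKI_proof (E : pr_system) (k : var) (S : sequent) : Prop :=
  deriv E NoLinks (fun k' t => k' = k /\ forall v, In v (fv_term t) -> v = k) S.

Record psymbol := { ps_seq : sequent; ps_n : var; ps_xs : list var }.

Fixpoint mk_sub (vs : list var) (ts : list term) : var -> term :=
  match vs, ts with
  | v :: vs', t :: ts' => fun w => if var_eqb w v then t else mk_sub vs' ts' w
  | _, _ => TFree
  end.

Definition subst_seq (sg : var -> term) (S : sequent) : sequent :=
  (map (subst_form sg) (fst S), map (subst_form sg) (snd S)).

Definition ps_inst (e : psymbol) (a : term) (as_ : list term) : sequent :=
  subst_seq (mk_sub (ps_n e :: ps_xs e) (a :: as_)) (ps_seq e).

Definition ps_args_ok (e : psymbol) (a : term) (as_ : list term) : Prop :=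
  Forall2 (fun t v => wf_term [] t (fst v)) (a :: as_) (ps_n e :: ps_xs e).

Definition ps_ok (e : psymbol) : Prop :=
  fst (ps_n e) = SO /\ NoDup (ps_n e :: ps_xs e).

(** k-proof links to psi_j for j > i (0-based positions in [es]). *)
Definition k_links (k : var) (es : list psymbol) (i : nat) (S : sequent) : Prop :=
  exists j e a as_, i < j /\ nth_error es j = Some e /\ ps_args_ok e a as_ /\
    (forall v, In v (fv_term a) -> v = k) /\ S = ps_inst e a as_.

Definition self_links (k : var) (es : list psymbol) (i : nat) (S : sequent) : Prop :=
  exists e as_, nth_error es i = Some e /\ ps_args_ok e (TFree k) as_ /\
    S = ps_inst e (TFree k) as_.

Definition proof_schema (E : pr_system) (k : var) (es : list psymbol) : Prop :=
  es <> [] /\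
  forall i e, nth_error es i = Some e ->
    ps_ok e /\
    LKS_proof E (k_links k es i) (ps_inst e TZero (map TFree (ps_xs e))) /\
    LKS_proof E (fun S => self_links k es i S \/ k_links k es i S)
              (ps_inst e (TSucc (TFree k)) (map TFree (ps_xs e))).

Definition end_sequent (es : list psymbol) (S : sequent) : Prop :=
  exists e, hd_error es = Some e /\ ps_seq e = S.

End Syntax.

Arguments pr_system : clear implicits.
Arguments sequent : clear implicits.
Arguments psymbol : clear implicits.

From Stdlib Require Import List Permutation Arith Bool Lia.
Import ListNotations.

(* Every induction inference
        A(k), G |- D, A(k+1)
     --------------------------
      A(0), G |- D, A(t)
   is replaced by a proof link (psi(t)) to a fresh proof symbol psi whose
   sequent is  A(0), G |- D, A(n)  (with n := k, no further parameters).
   Its pair is:  pi  = an identity  A(0), G |- D, A(0);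
                 nu(k) = a cut of the self-link  A(0), G |- D, A(k)  with the
                         (recursively converted) premise, then contractions.
   Since vars(t) is contained in {k}, (psi(t)) is a k-proof link.

   The theorem follows by putting in front a symbol whose
   sequent is S itself, with a variable n not free in S: its pi is the
   converted proof and its nu(k) is a single self-link. *)

Section ProofSchemata.
Context {Sg : signature}.

Lemma var_eqb_true (v w : var) : var_eqb v w = true -> v = w.
Proof.
  destruct v as [[] a], w as [[] b]; unfold var_eqb; simpl; try discriminate;
    intro H; apply Nat.eqb_eq in H; subst; reflexivity.
Qed.

Fixpoint term_ind' (P : @term Sg -> Prop)
  (H1 : forall v, P (TFree v)) (H2 : forall i, P (TBound i)) (H3 : P TZero)
  (H4 : forall t, P t -> P (TSucc t))
  (H5 : forall f l, Forall P l -> P (TApp f l)) (t : term) : P t :=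
  match t with
  | TFree v => H1 v
  | TBound i => H2 i
  | TZero => H3
  | TSucc u => H4 u (term_ind' P H1 H2 H3 H4 H5 u)
  | TApp f l =>
      H5 f l ((fix go l : Forall P l :=
                 match l with
                 | [] => Forall_nil _
                 | a :: l' => Forall_cons _ (term_ind' P H1 H2 H3 H4 H5 a) (go l')
                 end) l)
  end.

Lemma subst_term_id (sg : var -> term) (t : @term Sg) :
  (forall v, In v (fv_term t) -> sg v = TFree v) -> subst_term sg t = t.
Proof.
  induction t using term_ind'; simpl; intros Hs; f_equal; auto.
  induction H as [|u l Hu _ IHl]; simpl in *; f_equal; auto using in_or_app.
Qed.

Lemma subst_form_id (sg : var -> term) (A : @formula Sg) :
  (forall v, In v (fv_form A) -> sg v = TFree v) -> subst_form sg A = A.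
Proof.
  induction A; simpl; intros H; f_equal; auto using in_or_app.
  induction l; simpl in *; f_equal; auto using in_or_app, subst_term_id.
Qed.

Lemma subst_form_fresh (x : var) (u : @term Sg) (A : formula) :
  ~ In x (fv_form A) -> subst_form (sub1 x u) A = A.
Proof.
  intro Hx; apply subst_form_id; intros v Hv; unfold sub1.
  destruct (var_eqb v x) eqn:Hvx; auto.
  apply var_eqb_true in Hvx; subst; contradiction.
Qed.

Lemma subst_form_self (x : var) (A : @formula Sg) :
  subst_form (sub1 x (TFree x)) A = A.
Proof.
  apply subst_form_id; intros v _; unfold sub1.
  destruct (var_eqb v x) eqn:Hvx; auto.
  apply var_eqb_true in Hvx; subst; reflexivity.
Qed.

Lemma subst_seq_fresh (x : var) (u : @term Sg) (G D : list formula) :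
  ~ In x (fv_seq (G, D)) -> subst_seq (sub1 x u) (G, D) = (G, D).
Proof.
  intro Hx; unfold subst_seq; simpl; f_equal;
    rewrite <- map_id; apply map_ext_in; intros B HB; apply subst_form_fresh;
    intro HxB; apply Hx; unfold fv_seq; apply in_flat_map; exists B;
    split; auto; simpl; apply in_or_app; auto.
Qed.

Definition fresh_index (l : list var) : nat := S (fold_right Nat.max 0 (map snd l)).

Lemma fresh_index_spec (l : list var) (s : sort) : ~ In (s, fresh_index l) l.
Proof.
  assert (Hbound : forall v, In v l -> snd v < fresh_index l).
  { unfold fresh_index; induction l as [|w l IH]; simpl; intros v Hv; [contradiction|].
    destruct Hv as [<-|Hv]; [lia|specialize (IH v Hv); lia]. }
  intro Hin; apply Hbound in Hin; simpl in Hin; lia.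
Qed.

Section AdmissibleRules.
Variables (E : pr_system Sg) (L : sequent Sg -> Prop) (Ind : var -> @term Sg -> Prop).

Fixpoint fsize (A : @formula Sg) : nat :=
  match A with
  | FAtom _ _ => 0
  | FNeg B => S (fsize B)
  | FAnd B C | FOr B C | FImp B C => S (fsize B + fsize C)
  | FAll _ B | FEx _ B => S (fsize B)
  end.

Lemma fsize_open (d : nat) (u : term) (A : formula) :
  fsize (open_form d u A) = fsize A.
Proof. revert d; induction A; intros; simpl; auto. Qed.

(* Identity sequents for arbitrary formulas, by induction on the size
   (quantifier bodies are instantiated with a fresh eigenvariable). *)
Lemma identity_bounded (n : nat) (A : formula) :
  fsize A <= n -> deriv E L Ind ([A], [A]).
Proof.
  revert A; induction n; intros A Hs; destruct A; simpl in Hs; try lia;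
    try (apply d_ax; unfold is_atom; eauto; fail).
  - apply d_negr; eapply d_perm; [apply (d_negl (A := A) (G := [A]) (D := [])), IHn; lia
                                 | apply perm_swap | auto].
  - apply d_andr; [apply d_andl1 | apply d_andl2]; apply IHn; lia.
  - apply d_orl; [apply d_orr1 | apply d_orr2]; apply IHn; lia.
  - apply d_impr; eapply d_perm;
      [apply (d_impl (A := A1) (B := A2) (G1 := [A1]) (D1 := []) (G2 := []) (D2 := [A2])); apply IHn; lia
      | apply perm_swap | auto].
  - set (a := (s, fresh_index (fv_form A))).
    assert (Ha : ~ In a (fv_form A)) by apply fresh_index_spec.
    apply (d_allr A a); auto.
    + unfold fv_seq; simpl; rewrite !app_nil_r; intro Hi; apply in_app_or in Hi; tauto.
    + apply (d_alll s A (TFree a) (G := [])); simpl; auto.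
      apply IHn; unfold inst; rewrite fsize_open; lia.
  - set (a := (s, fresh_index (fv_form A))).
    assert (Ha : ~ In a (fv_form A)) by apply fresh_index_spec.
    apply (d_exl A a); auto.
    + unfold fv_seq; simpl; rewrite !app_nil_r; intro Hi; apply in_app_or in Hi; tauto.
    + apply (d_exr s A (TFree a) (D := [])); simpl; auto.
      apply IHn; unfold inst; rewrite fsize_open; lia.
Qed.

Lemma weakening (G' D' G D : list formula) :
  deriv E L Ind (G, D) -> deriv E L Ind (G' ++ G, D' ++ D).
Proof.
  intro P; induction G' as [|A G' IH]; simpl.
  - induction D' as [|B D' IHD]; simpl; auto using d_wr.
  - apply d_wl, IH.
Qed.

Lemma identity_weakened (A : formula) (G D : list formula) :
  deriv E L Ind (A :: G, A :: D).
Proof.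
  eapply d_perm; [apply (weakening G D), (identity_bounded (fsize A)); auto
                 | apply Permutation_sym, Permutation_cons_append ..].
Qed.

Lemma contraction_l (H G D : list formula) :
  deriv E L Ind (H ++ H ++ G, D) -> deriv E L Ind (H ++ G, D).
Proof.
  revert G; induction H as [|A H IH]; simpl; intros G P; auto.
  assert (PA : deriv E L Ind (A :: H ++ H ++ G, D)).
  { apply d_cl; eapply d_perm; [exact P | | auto].
    constructor; apply Permutation_sym, Permutation_middle. }
  assert (PH : deriv E L Ind (H ++ H ++ A :: G, D)).
  { eapply d_perm; [exact PA | | auto]; rewrite !app_assoc; apply Permutation_middle. }
  eapply d_perm; [exact (IH _ PH) | apply Permutation_sym, Permutation_middle | auto].
Qed.

Lemma contraction_r (H G D : list formula) :
  deriv E L Ind (G, H ++ H ++ D) -> deriv E L Ind (G, H ++ D).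
Proof.
  revert D; induction H as [|A H IH]; simpl; intros D P; auto.
  assert (PA : deriv E L Ind (G, A :: H ++ H ++ D)).
  { apply d_cr; eapply d_perm; [exact P | auto |].
    constructor; apply Permutation_sym, Permutation_middle. }
  assert (PH : deriv E L Ind (G, H ++ H ++ A :: D)).
  { eapply d_perm; [exact PA | auto |]; rewrite !app_assoc; apply Permutation_middle. }
  eapply d_perm; [exact (IH _ PH) | auto | apply Permutation_sym, Permutation_middle].
Qed.

End AdmissibleRules.

Lemma deriv_links_mono {E : pr_system Sg} {L L' : sequent Sg -> Prop}
  {Ind : var -> @term Sg -> Prop} :
  (forall S, L S -> L' S) -> forall S, deriv E L Ind S -> deriv E L' Ind S.
Proof.
  intros HL S P; induction P;
  [ eapply d_ax | eapply d_link | eapply d_perm | eapply d_wl | eapply d_wr | eapply d_cl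
  | eapply d_cr | eapply d_cut | eapply d_negl | eapply d_negr | eapply d_andl1
  | eapply d_andl2 | eapply d_andr | eapply d_orl | eapply d_orr1 | eapply d_orr2
  | eapply d_impl | eapply d_impr | eapply d_alll | eapply d_allr | eapply d_exl
  | eapply d_exr | eapply d_eq | eapply d_ind ]; eauto.
Qed.

Definition simple_symbol (S : sequent Sg) (n : var) : psymbol Sg :=
  {| ps_seq := S; ps_n := n; ps_xs := [] |}.

Lemma simple_symbol_inst (S : sequent Sg) (n : var) (u : term) :
  ps_inst (simple_symbol S n) u [] = subst_seq (sub1 n u) S.
Proof. reflexivity. Qed.

Lemma simple_symbol_ok (S : sequent Sg) (n : var) :
  fst n = SO -> ps_ok (simple_symbol S n).
Proof. split; auto; repeat constructor; intros []. Qed.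

Lemma simple_symbol_args (S : sequent Sg) (n : var) (u : term) :
  fst n = SO -> wf_term [] u SO -> ps_args_ok (simple_symbol S n) u [].
Proof. intros Hn Hu; repeat constructor; simpl; rewrite Hn; exact Hu. Qed.

Section Schemata.
Variables (E : pr_system Sg) (k : var).
Hypothesis k_sort : fst k = SO.

Definition links_into (es : list (psymbol Sg)) (S : sequent Sg) : Prop :=
  exists j e a as_, nth_error es j = Some e /\ ps_args_ok e a as_ /\
    (forall v, In v (fv_term a) -> v = k) /\ S = ps_inst e a as_.

Definition schema_pair (es : list (psymbol Sg)) (i : nat) (e : psymbol Sg) : Prop :=
  ps_ok e /\
  LKS_proof E (k_links k es i) (ps_inst e TZero (map TFree (ps_xs e))) /\
  LKS_proof E (fun S => self_links k es i S \/ k_links k es i S)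
            (ps_inst e (TSucc (TFree k)) (map TFree (ps_xs e))).

(* A proof schema, except possibly empty. *)
Definition schema_pairs (es : list (psymbol Sg)) : Prop :=
  forall i e, nth_error es i = Some e -> schema_pair es i e.

Lemma simple_symbol_self_link (S S' : sequent Sg) (n : var) (es : list (psymbol Sg)) :
  fst n = SO -> ps_inst (simple_symbol S n) (TFree k) [] = S' ->
  self_links k (simple_symbol S n :: es) 0 S'.
Proof.
  intros Hn HS'; exists (simple_symbol S n), []; split; [reflexivity|].
  split; [apply simple_symbol_args; [exact Hn | exact k_sort] | symmetry; exact HS'].
Qed.

Lemma k_links_transport (f : nat -> nat) {es es' : list (psymbol Sg)}
  {i i' : nat} {S : sequent Sg} :
  (forall j e, i < j -> nth_error es j = Some e ->
     i' < f j /\ nth_error es' (f j) = Some e) ->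
  k_links k es i S -> k_links k es' i' S.
Proof.
  intros Hf (j & e & a & as_ & Hij & Hj & Ha & Hk & ->).
  destruct (Hf j e Hij Hj) as [Hlt Hnth].
  exists (f j), e, a, as_; auto.
Qed.

Lemma links_into_transport (f : nat -> nat) (es es' : list (psymbol Sg))
  (S : sequent Sg) :
  (forall j e, nth_error es j = Some e -> nth_error es' (f j) = Some e) ->
  links_into es S -> links_into es' S.
Proof.
  intros Hf (j & e & a & as_ & Hj & Ha & Hk & ->).
  exists (f j), e, a, as_; auto.
Qed.

Lemma schema_pair_transport (f : nat -> nat) (es es' : list (psymbol Sg))
  (i i' : nat) (e : psymbol Sg) :
  nth_error es' i' = nth_error es i ->
  (forall j e', i < j -> nth_error es j = Some e' ->
     i' < f j /\ nth_error es' (f j) = Some e') ->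
  schema_pair es i e -> schema_pair es' i' e.
Proof.
  intros Hi Hf (Hok & Pbase & Pstep); split; [exact Hok | split].
  - eapply deriv_links_mono; [|exact Pbase]; intros S; exact (k_links_transport f Hf).
  - eapply deriv_links_mono; [|exact Pstep].
    intros S [(e' & as_ & He & Ha & ->) | HS]; [left | right].
    + exists e', as_; rewrite Hi; auto.
    + exact (k_links_transport f Hf HS).
Qed.

(* Concatenation of proof schemata (links only point further right). *)
Lemma schema_pairs_app (es1 es2 : list (psymbol Sg)) :
  schema_pairs es1 -> schema_pairs es2 -> schema_pairs (es1 ++ es2).
Proof.
  intros H1 H2 i e Hi.
  destruct (Nat.lt_ge_cases i (length es1)) as [Hl|Hl].
  - rewrite nth_error_app1 in Hi by exact Hl.
    apply (schema_pair_transport (fun j => j) es1 _ i); auto.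
    + apply nth_error_app1; exact Hl.
    + intros j e' Hj He'; split; [exact Hj|].
      rewrite nth_error_app1; [exact He' | apply nth_error_Some; congruence].
  - rewrite nth_error_app2 in Hi by exact Hl.
    apply (schema_pair_transport (fun j => length es1 + j) es2 _ (i - length es1)); auto.
    + rewrite nth_error_app2 by lia; f_equal; lia.
    + intros j e' Hj He'; split; [lia|].
      rewrite nth_error_app2 by lia; rewrite <- He'; f_equal; lia.
Qed.

Lemma schema_pairs_cons (e0 : psymbol Sg) (es : list (psymbol Sg)) :
  schema_pairs es -> ps_ok e0 ->
  LKS_proof E (links_into es) (ps_inst e0 TZero (map TFree (ps_xs e0))) ->
  LKS_proof E (fun S => self_links k (e0 :: es) 0 S \/ links_into es S)
            (ps_inst e0 (TSucc (TFree k)) (map TFree (ps_xs e0))) ->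
  schema_pairs (e0 :: es).
Proof.
  intros Hes Hok Pbase Pstep [|i] e Hi; simpl in Hi.
  - injection Hi as <-.
    assert (Hlinks : forall Sq, links_into es Sq -> k_links k (e0 :: es) 0 Sq).
    { intros Sq (j & e & a & as_ & HSq); exists (S j), e, a, as_; split; [lia | exact HSq]. }
    split; [exact Hok | split].
    + eapply deriv_links_mono; [exact Hlinks | exact Pbase].
    + eapply deriv_links_mono; [|exact Pstep]; intros Sq [HSq|HSq]; auto.
  - apply (schema_pair_transport S es _ i); auto.
    intros j e' Hj He'; split; [lia | exact He'].
Qed.

Definition schema_provable (S : sequent Sg) : Prop :=
  exists es, schema_pairs es /\ deriv E (links_into es) NoInd S.

Lemma schema_provable_rule1 (S1 S : sequent Sg) :
  (forall L, deriv E L NoInd S1 -> deriv E L NoInd S) ->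
  schema_provable S1 -> schema_provable S.
Proof. intros Hrule (es & Hes & P); exists es; auto. Qed.

(* A rule with two premises: the two schemata are concatenated. *)
Lemma schema_provable_rule2 (S1 S2 S : sequent Sg) :
  (forall L, deriv E L NoInd S1 -> deriv E L NoInd S2 -> deriv E L NoInd S) ->
  schema_provable S1 -> schema_provable S2 -> schema_provable S.
Proof.
  intros Hrule (es1 & H1 & P1) (es2 & H2 & P2).
  exists (es1 ++ es2); split; [apply schema_pairs_app; auto|].
  apply Hrule; [refine (deriv_links_mono _ _ P1) | refine (deriv_links_mono _ _ P2)]; intros S'.
  - apply (links_into_transport (fun j => j)); intros j e He.
    rewrite nth_error_app1; [exact He | apply nth_error_Some; congruence].
  - apply (links_into_transport (fun j => length es1 + j)); intros j e He.
    rewrite nth_error_app2 by lia; rewrite <- He; f_equal; lia.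
Qed.

Lemma induction_step (L : sequent Sg -> Prop) (A A0 A1 : formula)
  (G D : list formula) :
  deriv E L NoInd (A0 :: G, A :: D) -> deriv E L NoInd (A :: G, A1 :: D) ->
  deriv E L NoInd (A0 :: G, A1 :: D).
Proof.
  intros Plink Ppremise.
  assert (Pcut : deriv E L NoInd (G ++ G ++ [A0], D ++ D ++ [A1])).
  { eapply d_perm; [exact (d_cut Plink Ppremise) | |].
    - rewrite app_assoc; apply Permutation_cons_append.
    - apply Permutation_app_head, Permutation_cons_append. }
  apply contraction_l, contraction_r in Pcut.
  eapply d_perm; [exact Pcut | apply Permutation_sym, Permutation_cons_append ..].
Qed.

Lemma schema_provable_induction (A : formula) (t : term) (G D : list formula) :
  wf_term [] t SO -> (forall v, In v (fv_term t) -> v = k) ->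
  ~ In k (fv_seq (subst_form (sub1 k TZero) A :: G, D)) ->
  schema_provable (A :: G, subst_form (sub1 k (TSucc (TFree k))) A :: D) ->
  schema_provable (subst_form (sub1 k TZero) A :: G, subst_form (sub1 k t) A :: D).
Proof.
  intros Ht Htk Hfresh (es & Hes & Ppremise).
  set (A0 := subst_form (sub1 k TZero) A) in *.
  set (psi := simple_symbol (A0 :: G, A :: D) k).
  assert (Hinst : forall u, ps_inst psi u [] = (A0 :: G, subst_form (sub1 k u) A :: D)).
  { intro u; unfold psi; rewrite simple_symbol_inst.
    pose proof (subst_seq_fresh k u (A0 :: G) D Hfresh) as HGD.
    unfold subst_seq in *; simpl in *; injection HGD; congruence. }
  exists (psi :: es); split.
  - apply schema_pairs_cons; [exact Hes | apply simple_symbol_ok, k_sort | ..];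
      change (map TFree (ps_xs psi)) with (@nil (@term Sg)); rewrite Hinst.
    + apply identity_weakened.
    + apply (induction_step _ A); [|eapply deriv_links_mono; [|exact Ppremise]; auto].
      apply d_link; left; apply simple_symbol_self_link; [exact k_sort|].
      rewrite Hinst, subst_form_self; reflexivity.
  - apply d_link; exists 0, psi, t, [].
    split; [reflexivity|]; split; [apply simple_symbol_args; auto|].
    split; [exact Htk | rewrite Hinst; reflexivity].
Qed.

Tactic Notation "by_rule1" uconstr(rule) :=
  eapply schema_provable_rule1; [intros ?L ?P; eapply rule; eauto | eassumption].
Tactic Notation "by_rule2" uconstr(rule) :=
  eapply schema_provable_rule2; [intros ?L ?P1 ?P2; eapply rule; eauto | eassumption ..].

Lemma k_simple_schema_provable (S : sequent Sg) :
  k_simple_LKI_proof E k S -> schema_provable S.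
Proof.
  intro P; induction P.
  - exists []; split; [intros [|] ? ?; discriminate | apply d_ax; auto].
  - contradiction.
  - by_rule1 d_perm.
  - by_rule1 d_wl.
  - by_rule1 d_wr.
  - by_rule1 d_cl.
  - by_rule1 d_cr.
  - by_rule2 d_cut.
  - by_rule1 d_negl.
  - by_rule1 d_negr.
  - by_rule1 d_andl1.
  - by_rule1 d_andl2.
  - by_rule2 d_andr.
  - by_rule2 d_orl.
  - by_rule1 d_orr1.
  - by_rule1 d_orr2.
  - by_rule2 d_impl.
  - by_rule1 d_impr.
  - by_rule1 d_alll.
  - by_rule1 d_allr.
  - by_rule1 d_exl.
  - by_rule1 d_exr.
  - by_rule1 d_eq.
  - destruct H as [-> Htk]; apply schema_provable_induction; auto.
Qed.

End Schemata.
End ProofSchemata.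

Theorem mainTheorem6 (Sg : signature) (E : pr_system Sg) (k : var)
  (S : sequent Sg) :
  pr_system_ok E -> fst k = SO ->
  k_simple_LKI_proof E k S ->
  exists es : list (psymbol Sg), proof_schema E k es /\ end_sequent es S.
Proof.
  intros _ HkSO P.
  destruct (k_simple_schema_provable E k HkSO S P) as (es & Hes & Pconv).
  set (n := (SO, fresh_index (fv_seq S))).
  assert (Hconst : forall u, ps_inst (simple_symbol S n) u [] = S).
  { intro u; rewrite simple_symbol_inst; destruct S as [G D].
    apply subst_seq_fresh, fresh_index_spec. }
  exists (simple_symbol S n :: es); split.
  - split; [discriminate|].
    apply schema_pairs_cons; [exact Hes | apply simple_symbol_ok; reflexivity | ..];
      change (map TFree (ps_xs (simple_symbol S n))) with (@nil (@term Sg)); rewrite Hconst.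
    + exact Pconv.
    + apply d_link; left; apply (simple_symbol_self_link _ HkSO); [reflexivity | apply Hconst].
  - exists (simple_symbol S n); split; reflexivity.
Qed.
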